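(* A graph $G$ is a pseudo-cograph if and only if every induced subgraph of $G$ is a pseudo-cograph.
   Context: Graphs finite, simple, undirected; $G-v$ is $G$ with $v$ deleted; the join of vertex-disjoint graphs adds all edges between them to the disjoint union; a cograph is a graph without induced $P_4$. $G$ is a pseudo-cograph if $|V(G)|\le2$ or there are induced subgraphs $G_1,G_2$ of $G$ and $v\in V(G)$ with (F1) $V(G)=V(G_1)\cup V(G_2)$, $V(G_1)\cap V(G_2)=\{v\}$, $|V(G_1)|,|V(G_2)|>1$; (F2) $G_1,G_2$ are cographs; (F3) $G-v$ is the join or the disjoint union of $G_1-v$ and $G_2-v$. *)

(* A finite simple graph is represented by a symmetric,
   irreflexive relation e on a finType T (the ambient graph) together with
   a vertex set V : {set T}; the graph is the subgraph of (T,e) induced on V.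
   Induced subgraphs of (V,e) are exactly (W,e) for W \subset V. *)
From mathcomp Require Import all_boot.
Set Implicit Arguments.
Unset Strict Implicit.
Unset Printing Implicit Defensive.

Section Graphs.
Variable T : finType.
Variable e : rel T.

Definition has_induced_P4 (V : {set T}) : Prop :=
  exists a b c d : T,
    [/\ [/\ a \in V, b \in V, c \in V & d \in V],
        uniq [:: a; b; c; d],
        [/\ e a b, e b c & e c d] &
        [/\ ~~ e a c, ~~ e a d & ~~ e b d]].

Definition cograph (V : {set T}) : Prop := ~ has_induced_P4 V.

Definition pseudo_cograph (V : {set T}) : Prop :=
  #|V| <= 2 \/
  exists (V1 V2 : {set T}) (v : T),
    [/\ [/\ V = V1 :|: V2, V1 :&: V2 = [set v], 1 < #|V1| & 1 < #|V2|],
        cograph V1 /\ cograph V2 &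
        (forall x y, x \in V1 :\ v -> y \in V2 :\ v -> e x y) \/
        (forall x y, x \in V1 :\ v -> y \in V2 :\ v -> ~~ e x y)].

End Graphs.

From mathcomp Require Import all_boot.
Set Implicit Arguments.
Unset Strict Implicit.
Unset Printing Implicit Defensive.

(* An induced subgraph W of a pseudo-cograph glued from G1 and G2 at v is
   glued from W :&: G1 and W :&: G2 at v, unless v is not in W, where W is a
   join or disjoint union of two cographs, or one part is just {v}, where W
   lies in the other cograph.  Either way it remains to show that cographs are
   pseudo-cographs.  This is Seinsche's theorem: a cograph with at least two
   vertices splits into two nonempty parts with all or no edges between them;
   splitting G - v and adding v to both parts gives (F1)-(F3).  Seinsche's
   theorem is proved by induction, adding a vertex x to a split of G - x: when
   the split cannot be repaired an induced P4 through x appears, and the case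
   of a complete split follows by complementation since P4 is
   self-complementary. *)

Section Homogeneous.
Variables (T : finType) (e : rel T).
Hypothesis e_sym : symmetric e.

Definition complete (A B : {set T}) := forall x y, x \in A -> y \in B -> e x y.
Definition anticomplete (A B : {set T}) := forall x y, x \in A -> y \in B -> ~~ e x y.
Definition homogeneous (A B : {set T}) := complete A B \/ anticomplete A B.

Definition decomposable (U : {set T}) :=
  exists X : {set T},
    [/\ X \subset U, X != set0, U :\: X != set0 & homogeneous X (U :\: X)].

Lemma cograph_subset (A B : {set T}) : B \subset A -> cograph e A -> cograph e B.
Proof.
move=> BA cogA [a [b [c [d [[aB bB cB dB] uniq_abcd edges nonedges]]]]].
by apply: cogA; exists a, b, c, d; split=> //; split; apply: (subsetP BA).
Qed.

Lemma homogeneous_sym (A B : {set T}) : homogeneous A B -> homogeneous B A.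
Proof. by case=> h; [left | right] => x y xB yA; rewrite e_sym; apply: h. Qed.

Lemma homogeneous_subset (A B A' B' : {set T}) :
  A' \subset A -> B' \subset B -> homogeneous A B -> homogeneous A' B'.
Proof.
move=> /subsetP A'A /subsetP B'B.
by case=> h; [left | right] => x y /A'A xA /B'B yB; apply: h.
Qed.

Lemma cograph_union (A B : {set T}) :
  cograph e A -> cograph e B -> homogeneous A B -> cograph e (A :|: B).
Proof.
move=> cogA cogB hAB [a [b [c [d [[aU bU cU dU] uniq_abcd edges nonedges]]]]].
wlog aA : A B cogA cogB hAB aU bU cU dU / a \in A.
  move=> wlog_aA; have [aA | aNA] := boolP (a \in A); first exact: (wlog_aA A B).
  rewrite setUC in aU bU cU dU; apply: (wlog_aA B A) => //.
    exact: homogeneous_sym.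
  by move: aU; rewrite inE (negbTE aNA) orbF.
suff [bA cA dA] : [/\ b \in A, c \in A & d \in A].
  by apply: cogA; exists a, b, c, d.
have [eab ebc ecd] := edges; have [nac nad nbd] := nonedges.
(* Both the edges and the non-edges of a P4 connect its four vertices. *)
case: hAB => hAB.
- have stay x y : x \in A -> y \in A :|: B -> ~~ e x y -> y \in A.
    by move=> xA; rewrite inE => /orP[// | yB]; rewrite hAB.
  have cA := stay a c aA cU nac; have dA := stay a d aA dU nad.
  by rewrite cA dA (stay d b dA bU) // e_sym.
- have stay x y : x \in A -> y \in A :|: B -> e x y -> y \in A.
    by move=> xA; rewrite inE => /orP[// | yB]; rewrite (negbTE (hAB x y xA yB)).
  have bA := stay a b aA bU eab; have cA := stay b c bA cU ebc.
  by rewrite bA cA (stay c d cA dU ecd).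
Qed.

Lemma decomposable_of_nonneighbour (U A : {set T}) x b c :
  x \in U -> A \subset U :\ x -> anticomplete A ((U :\ x) :\: A) ->
  b \in (U :\ x) :\: A -> e x b -> c \in A -> ~~ e x c -> cograph e U ->
  decomposable U.
Proof.
move=> xU /subsetP AUx antiA bB exb cA nxc cogU.
have inU z : z \in A -> (z != x) && (z \in U) by move/AUx; rewrite !inE.
have /and3P[bNA bx bU] : [&& b \notin A, b != x & b \in U] by move: bB; rewrite !inE.
have xNA : x \notin A by apply/negP => /inU; rewrite eqxx.
exists [set z in A | ~~ e x z]; split.
- by apply/subsetP=> z; rewrite inE => /andP[/inU /andP[]].
- by apply/set0Pn; exists c; rewrite inE cA nxc.
- by apply/set0Pn; exists x; rewrite !inE (negbTE xNA) xU.
right=> z y; rewrite !inE => /andP[zA nxz] /andP[yNX yU].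
have [-> | yx] := eqVneq y x; first by rewrite e_sym.
have [yA | yNA] := boolP (y \in A); last by apply: antiA; rewrite // !inE yNA yx.
move: yNX; rewrite yA negbK /= => exy.
(* An edge zy would give the induced path z - y - x - b. *)
apply/negP => ezy; apply: cogU.
have /andP[zx zU] := inU z zA.
have zy : z != y by apply: contraNneq nxz => ->.
have zb : z != b by apply: contraNneq bNA => <-.
have yb : y != b by apply: contraNneq bNA => <-.
exists z, y, x, b; split => //.
- by rewrite /= !inE !negb_or zy zx zb yx yb eq_sym bx.
- by rewrite ezy e_sym exy exb.
- by rewrite e_sym nxz !antiA // !inE bNA bx.
Qed.

Lemma decomposable_extend_anticomplete (U X : {set T}) x c :
  x \in U -> X \subset U :\ x -> X != set0 -> (U :\ x) :\: X != set0 ->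
  anticomplete X ((U :\ x) :\: X) -> c \in U :\ x -> ~~ e x c -> cograph e U ->
  decomposable U.
Proof.
move=> xU XUx Xn0 Bn0 antiX cUx nxc cogU.
set B := (U :\ x) :\: X in Bn0 antiX *.
have BUx : B \subset U :\ x by apply: subsetDl.
have XB : (U :\ x) :\: B = X by rewrite setDDr setDv set0U; apply/setIidPr.
have antiB : anticomplete B ((U :\ x) :\: B).
  by rewrite XB => z y zB yX; rewrite e_sym antiX.
(* If x sees B, either X contains a non-neighbour of x, or x sees all of X and
   the non-neighbour c lies in B. *)
case: (boolP [exists b in B, e x b]) => [/exists_inP[b bB exb] | /exists_inPn noB].
  case: (boolP [exists c' in X, ~~ e x c']) => [/exists_inP[c' c'X nxc'] | /exists_inPn allX].
    by apply: (decomposable_of_nonneighbour xU XUx antiX bB exb c'X nxc').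
  have /set0Pn[a aX] := Xn0.
  have cB : c \in B by rewrite inE cUx andbT; apply: contraNN nxc => /allX; rewrite negbK.
  apply: (decomposable_of_nonneighbour xU BUx antiB _ (negPn (allX a aX)) cB nxc cogU).
  by rewrite XB.
exists B; split.
- by apply: subset_trans BUx (subsetDl _ _).
- by [].
- by apply/set0Pn; exists x; rewrite !inE eqxx xU andbF.
right=> z y zB; rewrite inE => /andP[yNB yU].
have [-> | yx] := eqVneq y x; first by rewrite e_sym noB.
have yX : y \in X by move: yNB; rewrite !inE yx yU !andbT negbK.
by rewrite e_sym antiX.
Qed.

End Homogeneous.

Section Complement.
Variables (T : finType) (e : rel T).
Hypothesis e_sym : symmetric e.

Definition compl_rel : rel T := fun x y => (x != y) && ~~ e x y.

Lemma compl_rel_sym : symmetric compl_rel.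
Proof. by move=> x y; rewrite /compl_rel eq_sym e_sym. Qed.

(* The complement of the induced path a - b - c - d is the path b - d - a - c. *)
Lemma induced_P4_compl (U : {set T}) : has_induced_P4 compl_rel U -> has_induced_P4 e U.
Proof.
move=> [a [b [c [d [[aU bU cU dU] uniq_abcd edges nonedges]]]]].
move: uniq_abcd; rewrite /= !inE !negb_or => /and4P[/and3P[ab ac ad] /andP[bc bd] cd _].
move: edges nonedges; rewrite /compl_rel ab bc cd ac ad bd /= !negbK.
move=> [eab ebc ecd] [eac ead ebd].
exists b, d, a, c; split => //.
- by rewrite /= !inE !negb_or bd eq_sym ab bc eq_sym ad eq_sym cd ac.
- by rewrite ebd e_sym ead.
- by rewrite e_sym eab ebc e_sym ecd.
Qed.

Lemma cograph_compl (U : {set T}) : cograph e U -> cograph compl_rel U.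
Proof. by move=> cogU /induced_P4_compl. Qed.

Lemma anticomplete_compl (A B : {set T}) : complete e A B -> anticomplete compl_rel A B.
Proof. by move=> h x y xA yB; rewrite /compl_rel h // andbF. Qed.

Lemma decomposable_compl (U : {set T}) : decomposable compl_rel U -> decomposable e U.
Proof.
move=> [X [XU Xn0 Yn0 hX]]; exists X; split => //.
have neq z y : z \in X -> y \in U :\: X -> z != y.
  by move=> zX; apply: contraTneq => <-; rewrite inE zX.
case: hX => h; [right | left] => z y zX yY; have := h z y zX yY.
  by rewrite /compl_rel neq.
by rewrite /compl_rel neq //= negbK.
Qed.

End Complement.

Section Cographs.
Variables (T : finType) (e : rel T).
Hypothesis e_sym : symmetric e.

Lemma decomposable_extend (U : {set T}) x b c :
  x \in U -> decomposable e (U :\ x) -> b \in U :\ x -> e x b ->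
  c \in U :\ x -> ~~ e x c -> cograph e U -> decomposable e U.
Proof.
move=> xU [X [XUx Xn0 Yn0 [compX | antiX]]] bUx exb cUx nxc cogU; last first.
  exact: (decomposable_extend_anticomplete e_sym xU XUx Xn0 Yn0 antiX cUx nxc).
apply: decomposable_compl.
apply: (decomposable_extend_anticomplete (compl_rel_sym e_sym) xU XUx Xn0 Yn0 _ bUx).
- exact: anticomplete_compl.
- by rewrite /compl_rel exb andbF.
- exact: cograph_compl.
Qed.

Theorem cograph_decomposable (U : {set T}) :
  1 < #|U| -> cograph e U -> decomposable e U.
Proof.
have [n] := ubnP #|U|; elim: n U => // n IHn U ltUn gt1U cogU.
have [x xU] : exists x, x \in U by apply/set0Pn; rewrite -card_gt0 ltnW.
have cardU : #|U| = #|U :\ x|.+1 by rewrite (cardsD1 x) xU.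
have split_at_x : homogeneous e [set x] (U :\ x) -> decomposable e U.
  move=> hx; exists [set x]; split => //; first by rewrite sub1set.
    by apply/set0Pn; exists x; rewrite inE.
  by rewrite -card_gt0 -ltnS -cardU.
case: (boolP [exists c in U :\ x, ~~ e x c]) => [/exists_inP[c cUx nxc] | /exists_inPn allE].
  case: (boolP [exists b in U :\ x, e x b]) => [/exists_inP[b bUx exb] | /exists_inPn noE].
    apply: (decomposable_extend xU _ bUx exb cUx nxc cogU); apply: IHn.
    - by rewrite -ltnS -cardU.
    - by apply/card_gt1P; exists b, c; split => //; apply: contraTneq exb => ->.
    - exact: cograph_subset (subsetDl _ _) cogU.
  by apply: split_at_x; right=> _ y /set1P-> /noE.
by apply: split_at_x; left=> _ y /set1P-> /allE; rewrite negbK.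
Qed.

Lemma cograph_pseudo_cograph (W : {set T}) : cograph e W -> pseudo_cograph e W.
Proof.
move=> cogW; have [le2 | gt2] := leqP #|W| 2; [by left | right].
have [v vW] : exists v, v \in W by apply/set0Pn; rewrite -card_gt0 ltnW // ltnW.
have gt1 : 1 < #|W :\ v| by move: gt2; rewrite (cardsD1 v) vW.
have [X [XWv Xn0 Yn0 hXY]] :=
  cograph_decomposable gt1 (cograph_subset (subsetDl _ _) cogW).
set Y := (W :\ v) :\: X in Yn0 hXY.
have vX : v \notin X by apply/negP => /(subsetP XWv); rewrite !inE eqxx.
have vY : v \notin Y by rewrite !inE eqxx /= andbF.
exists (v |: X), (v |: Y), v; split.
- split.
  + by rewrite -setUUr -{1}(setIidPr XWv) setID setD1K.
  + by rewrite -setUIr setIDA setDIl setDv set0I setU0.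
  + by rewrite cardsU1 vX ltnS card_gt0.
  + by rewrite cardsU1 vY ltnS card_gt0.
- have XW : X \subset W := subset_trans XWv (subsetDl _ _).
  have YW : Y \subset W by apply: subset_trans (subsetDl (W :\ v) X) _; apply: subsetDl.
  by split; apply: cograph_subset cogW; rewrite subUset sub1set vW.
- by rewrite !setU1K.
Qed.

Lemma pseudo_cograph_subset (V W : {set T}) :
  W \subset V -> pseudo_cograph e V -> pseudo_cograph e W.
Proof.
move=> WV [le2 | [V1 [V2 [v [[defV capV _ _] [cogV1 cogV2] hV]]]]].
  by left; apply: leq_trans (subset_leq_card WV) le2.
set W1 := W :&: V1; set W2 := W :&: V2.
have defW : W = W1 :|: W2 by rewrite -setIUr -defV; apply/esym/setIidPl.
have cogW1 : cograph e W1 := cograph_subset (subsetIr _ _) cogV1.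
have cogW2 : cograph e W2 := cograph_subset (subsetIr _ _) cogV2.
have hW : homogeneous e (W1 :\ v) (W2 :\ v).
  by apply: (homogeneous_subset _ _ hV); apply: setSD; apply: subsetIr.
have [vW | vNW] := boolP (v \in W); last first.
  have Wv (A : {set T}) : (W :&: A) :\ v = W :&: A.
    by apply/setDidPl; rewrite disjoint_sym disjoints1 inE (negbTE vNW).
  apply: cograph_pseudo_cograph; rewrite defW; apply: cograph_union => //.
  by move: hW; rewrite /W1 /W2 !Wv.
have capW : W1 :&: W2 = [set v] by rewrite -setIIr capV; apply/setIidPr; rewrite sub1set.
have small_side (A B : {set T}) : A :&: B = [set v] -> #|A| <= 1 -> A \subset B.
  move=> capAB leA1; suff -> : A = [set v] by rewrite -capAB subsetIr.
  by apply/esym/eqP; rewrite eqEcard cards1 leA1 andbT -capAB subsetIl.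
have [le1W1 | gt1W1] := leqP #|W1| 1.
  by apply: cograph_pseudo_cograph; rewrite defW (setUidPr (small_side _ _ capW le1W1)).
have [le1W2 | gt1W2] := leqP #|W2| 1.
  rewrite setIC in capW.
  by apply: cograph_pseudo_cograph; rewrite defW (setUidPl (small_side _ _ capW le1W2)).
by right; exists W1, W2, v.
Qed.

End Cographs.

Theorem mainTheorem9 (T : finType) (e : rel T)
    (e_sym : symmetric e) (e_irr : irreflexive e) (V : {set T}) :
  pseudo_cograph e V <-> (forall W : {set T}, W \subset V -> pseudo_cograph e W).
Proof.
split=> [pV W WV | hV]; last exact: hV.
exact: (pseudo_cograph_subset e_sym WV pV).
Qed.
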